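(* Let $C$ and $\bar{C}$ be categories, each with a final object ($pt$, resp. $\bar{pt}$), fiber products, a class of confined maps, a class of independent squares and a class of allowable maps (all as described in the context), let $\bar{\ }: C\to\bar{C}$ be a functor respecting these structures, and let $F$ be a partial weak bivariant theory on $C$ and $H$ a partial weak bivariant theory on $\bar{C}$. Assume every map $X\to pt$ in $C$ (resp. $\bar X\to\bar{pt}$ in $\bar C$) is allowable, that $F_*(pt):=F(pt\to pt)$ contains an element $1_{pt}$ with $\alpha\bullet 1_{pt}=\alpha$ for all $\alpha\in F_*(X):=F(X\to pt)$ and all $X$, similarly $1_{\bar{pt}}\in H_*(\bar{pt})$ for $H$, and that every commutative square whose horizontal maps are identities (i.e. $g=\mathrm{id}_Y$, $g'=\mathrm{id}_X$, vertical maps both equal to some $f$) is independent. Let $c_*:F_*\to H_*$ be a natural transformation of the associated covariant theories (i.e. a family of homomorphisms $c_*:F(X\to pt)\to H(\bar X\to\bar{pt})$ with $c_*\circ f_*=\bar f_*\circ c_*$ for confined $f$) with $c_*(1_{pt})=1_{\bar{pt}}$. Fix a class of orientable objects of $C$ containing $pt$, with distinguished elements $e_Y\in F_*(Y)$ such that $c_*(e_Y)$ is a strong orientation in $H$ and $e_{pt}=1_{pt}$, and for each o-allowable $f:X\to Y$ let $\gamma_f:F(f:X\to Y)\to H(\bar f:\bar X\to\bar Y)$ be the unique homomorphism with $c_*(\alpha\bullet e_Y)=\gamma_f(\alpha)\,\bar\bullet\,c_*(e_Y)$ for all $\alpha$. Let $f:X\to Y$ be o-allowable and let $\alpha\in F(f:X\to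 Y)$ satisfy $c_*(\alpha\bullet\beta)=\gamma_f(\alpha)\,\bar\bullet\,c_*(\beta)$ for every $\beta\in F_*(Y)$. Then for every o-allowable $g:Y\to Z$ and every $\beta\in F(g:Y\to Z)$ one has $$\gamma_{g\circ f}(\alpha\bullet\beta)=\gamma_f(\alpha)\,\bar\bullet\,\gamma_g(\beta).$$
   Context: Setting (following Fulton–MacPherson). A category $C$ has a final object $pt$ and fiber products, a class of confined maps (closed under composition and base change, containing identities) and a class of independent squares (fiber squares, closed under vertical and horizontal composition, containing every square, or its transpose, whose two parallel sides are identity maps). A class of allowable maps is closed under composition and such that $g\circ f$ is allowable whenever $f$ is confined and $g$ allowable. A partial weak bivariant theory $T$ assigns to each allowable $f:X\to Y$ an abelian group $T(f:X\to Y)$ with: a product $\bullet:T(f:X\to Y)\times T(g:Y\to Z)\to T(g\circ f:X\to Z)$ (for $f,g$ allowable); a push-forward $f_*:T(g\circ f:X\to Z)\to T(g:Y\to Z)$ for $f$ confined and $g$ allowable; a pull-back $g^*:T(f:X\to Y)\to T(f':X'\to Y')$ for every independent square with $X'\to X$ over $g:Y'\to Y$ and $f,f'$ allowable; satisfying, for allowable maps, associativity of product, functoriality of push-forward and pull-back, and compatibility of product with push-forward, of product with pull-back, and of push-forward with pull-back (the bivariant projection formula is not required). A functor $\bar{\ }:C\to\bar C$ ''respecting the structures'' preserves final objects, confined maps, independent squares and allowable maps. For $H$ on $\bar C$, an element $\theta\in H(g:Y\to Z)$ is a strong orientation if $-\bullet\theta: H(f':X'\to Y)\to H(g\circ f':X'\to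 Z)$ is an isomorphism for all $f':X'\to Y$ (with the relevant maps allowable). A morphism $f:X\to Y$ of $C$ is o-allowable if it is allowable and $Y$ is orientable. The product in $H$ is written $\bar\bullet$. *)

From HB Require Import structures.
From mathcomp Require Import all_boot all_algebra.
Set Implicit Arguments.
Unset Strict Implicit.
Unset Printing Implicit Defensive.
Import GRing.Theory.
Local Open Scope ring_scope.

Record category := Category {
  Ob :> Type;
  Mor : Ob -> Ob -> Type;
  idh : forall X, Mor X X;
  compm : forall X Y Z, Mor Y Z -> Mor X Y -> Mor X Z;
  comp1m : forall X Y (f : Mor X Y), compm (idh Y) f = f;
  compm1 : forall X Y (f : Mor X Y), compm f (idh X) = f;
  compA : forall X Y Z W (f : Mor X Y) (g : Mor Y Z) (h : Mor Z W),
      compm h (compm g f) = compm (compm h g) f }.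

Arguments Mor {c} X Y : rename.
Arguments idh {c} X : rename.
Arguments compm {c X Y Z} g f : rename.
Arguments comp1m {c X Y} f : rename.
Arguments compm1 {c X Y} f : rename.
Arguments compA {c X Y Z W} f g h : rename.

Section CatDefs.
Variable C : category.

(* A square
      X' --g'--> X
      |f'        |f
      Y' --g --> Y          *)
Definition commutes (X' X Y' Y : C) (f : Mor X Y) (g : Mor Y' Y)
  (f' : Mor X' Y') (g' : Mor X' X) : Prop := compm f g' = compm g f'.

Definition fiber_square (X' X Y' Y : C) (f : Mor X Y) (g : Mor Y' Y)
  (f' : Mor X' Y') (g' : Mor X' X) : Prop :=
  commutes f g f' g' /\
  forall (W : C) (u : Mor W X) (v : Mor W Y'), compm f u = compm g v ->
    exists w : Mor W X',
      [/\ compm g' w = u, compm f' w = v &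
          forall w' : Mor W X', compm g' w' = u -> compm f' w' = v -> w' = w].

Definition has_fiber_products : Prop :=
  forall (X Y Y' : C) (f : Mor X Y) (g : Mor Y' Y),
    exists (X' : C) (f' : Mor X' Y') (g' : Mor X' X), fiber_square f g f' g'.

End CatDefs.

Record fm_data (C : category) := FMData {
  pt : C;
  term : forall X : C, Mor X pt;
  confined : forall X Y : C, Mor X Y -> Prop;
  indep : forall X' X Y' Y : C, Mor X Y -> Mor Y' Y -> Mor X' Y' -> Mor X' X -> Prop;
  allowable : forall X Y : C, Mor X Y -> Prop }.

Arguments pt {C} s : rename.
Arguments term {C} s X : rename.
Arguments confined {C} s {X Y} f : rename.
Arguments indep {C} s {X' X Y' Y} f g f' g' : rename.
Arguments allowable {C} s {X Y} f : rename.

Record fm_axioms (C : category) (S : fm_data C) : Prop := FMAxioms {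
  term_uniq : forall (X : C) (u : Mor X (pt S)), u = term S X;
  fiber_products : has_fiber_products C;
  confined_id : forall X : C, confined S (idh X);
  confined_comp : forall (X Y Z : C) (f : Mor X Y) (g : Mor Y Z),
      confined S f -> confined S g -> confined S (compm g f);
  confined_base_change : forall (X' X Y' Y : C) (f : Mor X Y) (g : Mor Y' Y)
      (f' : Mor X' Y') (g' : Mor X' X),
      fiber_square f g f' g' -> confined S f -> confined S f';
  indep_fiber : forall (X' X Y' Y : C) (f : Mor X Y) (g : Mor Y' Y)
      (f' : Mor X' Y') (g' : Mor X' X),
      indep S f g f' g' -> fiber_square f g f' g';
  indep_hcomp : forall (X'' X' X Y'' Y' Y : C)
      (f : Mor X Y) (g : Mor Y' Y) (f' : Mor X' Y') (g' : Mor X' X)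
      (h : Mor Y'' Y') (f'' : Mor X'' Y'') (h' : Mor X'' X'),
      indep S f g f' g' -> indep S f' h f'' h' ->
      indep S f (compm g h) f'' (compm g' h');
  indep_vcomp : forall (X' X Y' Y Z' Z : C)
      (f : Mor X Y) (g : Mor Y' Y) (f' : Mor X' Y') (g' : Mor X' X)
      (k : Mor Y Z) (h : Mor Z' Z) (k' : Mor Y' Z'),
      indep S f g f' g' -> indep S k h k' g ->
      indep S (compm k f) h (compm k' f') g';
  indep_id : forall (X Y : C) (f : Mor X Y),
      indep S f (idh Y) f (idh X) \/ indep S (idh Y) f (idh X) f;
  allowable_comp : forall (X Y Z : C) (f : Mor X Y) (g : Mor Y Z),
      allowable S f -> allowable S g -> allowable S (compm g f);
  allowable_conf_comp : forall (X Y Z : C) (f : Mor X Y) (g : Mor Y Z),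
      confined S f -> allowable S g -> allowable S (compm g f) }.

Arguments term_uniq {C S} _ {X} u : rename.

Definition termE (C : category) (S : fm_data C) (HS : fm_axioms S)
  (X Y : C) (f : Mor X Y) : compm (term S Y) f = term S X :=
  term_uniq HS (compm (term S Y) f).

Record pwbt_data (C : category) (S : fm_data C) := PWBTData {
  grp : forall X Y : C, Mor X Y -> zmodType;
  bprod : forall (X Y Z : C) (f : Mor X Y) (g : Mor Y Z),
      allowable S f -> allowable S g -> grp f -> grp g -> grp (compm g f);
  push : forall (X Y Z : C) (f : Mor X Y) (g : Mor Y Z),
      confined S f -> allowable S g -> grp (compm g f) -> grp g;
  pull : forall (X' X Y' Y : C) (f : Mor X Y) (g : Mor Y' Y)
      (f' : Mor X' Y') (g' : Mor X' X),
      indep S f g f' g' -> allowable S f -> allowable S f' -> grp f -> grp f' }.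

Arguments grp {C S} t {X Y} f : rename.
Arguments bprod {C S} t {X Y Z f g} af ag a b : rename.
Arguments push {C S} t {X Y Z f g} cf ag a : rename.
Arguments pull {C S} t {X' X Y' Y f g f' g'} i af af' a : rename.

Definition castT (C : category) (S : fm_data C) (F : pwbt_data S) (X Y : C)
  (f f' : Mor X Y) (e : f = f') (a : grp F f) : grp F f' :=
  eq_rect f (fun k => (grp F k : Type)) a f' e.
Arguments castT {C S} F {X Y f f'} e a : rename.

Definition castO (C : category) (S : fm_data C) (F : pwbt_data S)
  (A B : C) (e : A = B) (a : grp F (term S A)) : grp F (term S B) :=
  eq_rect A (fun Z => (grp F (term S Z) : Type)) a B e.
Arguments castO {C S} F {A B} e a : rename.

Record pwbt_axioms (C : category) (S : fm_data C) (F : pwbt_data S) : Prop := PWBTAxioms {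
  bprod_addl : forall (X Y Z : C) (f : Mor X Y) (g : Mor Y Z)
      (af : allowable S f) (ag : allowable S g) (a1 a2 : grp F f) (b : grp F g),
      bprod F af ag (a1 + a2) b = bprod F af ag a1 b + bprod F af ag a2 b;
  bprod_addr : forall (X Y Z : C) (f : Mor X Y) (g : Mor Y Z)
      (af : allowable S f) (ag : allowable S g) (a : grp F f) (b1 b2 : grp F g),
      bprod F af ag a (b1 + b2) = bprod F af ag a b1 + bprod F af ag a b2;
  push_add : forall (X Y Z : C) (f : Mor X Y) (g : Mor Y Z)
      (cf : confined S f) (ag : allowable S g) (a1 a2 : grp F (compm g f)),
      push F cf ag (a1 + a2) = push F cf ag a1 + push F cf ag a2;
  pull_add : forall (X' X Y' Y : C) (f : Mor X Y) (g : Mor Y' Y)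
      (f' : Mor X' Y') (g' : Mor X' X) (i : indep S f g f' g')
      (af : allowable S f) (af' : allowable S f') (a1 a2 : grp F f),
      pull F i af af' (a1 + a2) = pull F i af af' a1 + pull F i af af' a2;
  bprodA : forall (X Y Z W : C) (f : Mor X Y) (g : Mor Y Z) (h : Mor Z W)
      (af : allowable S f) (ag : allowable S g) (ah : allowable S h)
      (agf : allowable S (compm g f)) (ahg : allowable S (compm h g))
      (a : grp F f) (b : grp F g) (c : grp F h),
      castT F (compA f g h) (bprod F agf ah (bprod F af ag a b) c)
      = bprod F af ahg a (bprod F ag ah b c);
  push_id : forall (X Y : C) (g : Mor X Y) (c1 : confined S (idh X))
      (ag : allowable S g) (a : grp F (compm g (idh X))),
      push F c1 ag a = castT F (compm1 g) a;
  push_comp : forall (X Y Z W : C) (f : Mor X Y) (g : Mor Y Z) (h : Mor Z W)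
      (cf : confined S f) (cg : confined S g) (cgf : confined S (compm g f))
      (ah : allowable S h) (ahg : allowable S (compm h g))
      (a : grp F (compm h (compm g f))),
      push F cgf ah a = push F cg ah (push F cf ahg (castT F (compA f g h) a));
  pull_id : forall (X Y : C) (f : Mor X Y) (i : indep S f (idh Y) f (idh X))
      (af af' : allowable S f) (a : grp F f),
      pull F i af af' a = a;
  pull_comp : forall (X'' X' X Y'' Y' Y : C)
      (f : Mor X Y) (g : Mor Y' Y) (f' : Mor X' Y') (g' : Mor X' X)
      (h : Mor Y'' Y') (f'' : Mor X'' Y'') (h' : Mor X'' X')
      (i1 : indep S f g f' g') (i2 : indep S f' h f'' h')
      (i12 : indep S f (compm g h) f'' (compm g' h'))
      (af : allowable S f) (af' : allowable S f') (af'' : allowable S f'')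
      (a : grp F f),
      pull F i12 af af'' a = pull F i2 af' af'' (pull F i1 af af' a);
  bprod_push : forall (X Y Z W : C) (f : Mor X Y) (g : Mor Y Z) (h : Mor Z W)
      (cf : confined S f) (ag : allowable S g) (ah : allowable S h)
      (agf : allowable S (compm g f)) (ahg : allowable S (compm h g))
      (a : grp F (compm g f)) (b : grp F h),
      push F cf ahg (castT F (compA f g h) (bprod F agf ah a b))
      = bprod F ag ah (push F cf ag a) b;
  (* (A13) product and pull-back:
        X' --h''--> X
        |f'         |f
        Y' --h' --> Y
        |g'         |g
        Z' --h  --> Z           *)
  bprod_pull : forall (X' X Y' Y Z' Z : C)
      (f : Mor X Y) (h' : Mor Y' Y) (f' : Mor X' Y') (h'' : Mor X' X)
      (g : Mor Y Z) (h : Mor Z' Z) (g' : Mor Y' Z')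
      (itop : indep S f h' f' h'') (ibot : indep S g h g' h')
      (iout : indep S (compm g f) h (compm g' f') h'')
      (af : allowable S f) (af' : allowable S f') (ag : allowable S g)
      (ag' : allowable S g') (agf : allowable S (compm g f))
      (agf' : allowable S (compm g' f')) (a : grp F f) (b : grp F g),
      pull F iout agf agf' (bprod F af ag a b)
      = bprod F af' ag' (pull F itop af af' a) (pull F ibot ag ag' b);
  push_pull : forall (X' X Y' Y Z' Z : C)
      (f : Mor X Y) (h' : Mor Y' Y) (f' : Mor X' Y') (h'' : Mor X' X)
      (g : Mor Y Z) (h : Mor Z' Z) (g' : Mor Y' Z')
      (itop : indep S f h' f' h'') (ibot : indep S g h g' h')
      (iout : indep S (compm g f) h (compm g' f') h'')
      (cf : confined S f) (cf' : confined S f')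
      (ag : allowable S g) (ag' : allowable S g')
      (agf : allowable S (compm g f)) (agf' : allowable S (compm g' f'))
      (a : grp F (compm g f)),
      pull F ibot ag ag' (push F cf ag a) = push F cf' ag' (pull F iout agf agf' a) }.

Record functor_data (C D : category) := FunctorData {
  Fobj : C -> D;
  Fhom : forall X Y : C, Mor X Y -> Mor (Fobj X) (Fobj Y) }.
Arguments Fobj {C D} p X : rename.
Arguments Fhom {C D} p {X Y} f : rename.

Record respects (C D : category) (S : fm_data C) (S' : fm_data D)
  (P : functor_data C D) : Prop := Respects {
  F_id : forall X : C, Fhom P (idh X) = idh (Fobj P X);
  F_comp : forall (X Y Z : C) (f : Mor X Y) (g : Mor Y Z),
      Fhom P (compm g f) = compm (Fhom P g) (Fhom P f);
  F_pt : Fobj P (pt S) = pt S';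
  F_confined : forall (X Y : C) (f : Mor X Y), confined S f -> confined S' (Fhom P f);
  F_indep : forall (X' X Y' Y : C) (f : Mor X Y) (g : Mor Y' Y)
      (f' : Mor X' Y') (g' : Mor X' X),
      indep S f g f' g' -> indep S' (Fhom P f) (Fhom P g) (Fhom P f') (Fhom P g');
  F_allowable : forall (X Y : C) (f : Mor X Y), allowable S f -> allowable S' (Fhom P f) }.
Arguments F_comp {C D S S' P} _ {X Y Z} f g : rename.
Arguments F_pt {C D S S' P} _ : rename.

Definition strong_orientation (C : category) (S : fm_data C) (H : pwbt_data S)
  (Y Z : C) (g : Mor Y Z) (theta : grp H g) : Prop :=
  forall (X' : C) (f' : Mor X' Y) (af' : allowable S f') (ag : allowable S g),
    bijective (fun a : grp H f' => bprod H af' ag a theta).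

From HB Require Import structures.
From mathcomp Require Import all_boot all_algebra.
From Stdlib Require Import ProofIrrelevance.
Import GRing.Theory.
Local Open Scope ring_scope.

(* Let theta := c_*(e_Z).  As theta is a strong orientation, right
   multiplication by theta is injective, so it suffices to compare both sides
   after multiplying by theta.  The defining property of gamma_(gf),
   associativity in F, the hypothesis on alpha (applied to beta . e_Z), the
   defining property of gamma_g and associativity in H give
     gamma_(gf)(alpha . beta) . theta = c_*(alpha . (beta . e_Z))
                                      = gamma_f(alpha) . c_*(beta . e_Z)
                                      = (gamma_f(alpha) . gamma_g(beta)) . theta. *)

Set Implicit Arguments.
Unset Strict Implicit.

Section Casts.
Variables (C : category) (S : fm_data C) (F : pwbt_data S).

Lemma castT_irr (X Y : C) (k k' : Mor X Y) (e1 e2 : k = k') (x : grp F k) :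
  castT F e1 x = castT F e2 x.
Proof. by rewrite (proof_irrelevance _ e1 e2). Qed.

Lemma castT_comp (X Y : C) (k k' k'' : Mor X Y) (e1 : k = k') (e2 : k' = k'')
  (x : grp F k) :
  castT F e2 (castT F e1 x) = castT F (etrans e1 e2) x.
Proof. by subst. Qed.

Lemma castT_inj (X Y : C) (k k' : Mor X Y) (e : k = k') : injective (castT F e).
Proof. by subst. Qed.

Lemma bprod_castr (X Y Z : C) (f : Mor X Y) (g g' : Mor Y Z) (e : g = g')
  (af : allowable S f) (ag : allowable S g) (ag' : allowable S g')
  (a : grp F f) (b : grp F g) :
  bprod F af ag' a (castT F e b)
  = castT F (f_equal (fun k => compm k f) e) (bprod F af ag a b).
Proof. by subst; rewrite (proof_irrelevance _ ag ag'). Qed.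

End Casts.

Lemma strong_orientation_inj (C : category) (S : fm_data C) (H : pwbt_data S)
  (X Y Z : C) (f : Mor X Y) (g : Mor Y Z) (theta : grp H g)
  (af : allowable S f) (ag : allowable S g) :
  strong_orientation theta -> injective (fun a : grp H f => bprod H af ag a theta).
Proof. by move=> so; apply: bij_inj (so X f af ag). Qed.

Section ProductsToPoint.
Variables (C : category) (S : fm_data C) (HS : fm_axioms S).
Variables (F : pwbt_data S) (HF : pwbt_axioms F).
Variable allF : forall X : C, allowable S (term S X).

Lemma bprod_castl_term (X Y : C) (f f' : Mor X Y) (e : f = f')
  (af : allowable S f) (af' : allowable S f') (a : grp F f) (b : grp F (term S Y)) :
  castT F (termE HS f') (bprod F af' (allF Y) (castT F e a) b)
  = castT F (termE HS f) (bprod F af (allF Y) a b).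
Proof. by subst; rewrite (proof_irrelevance _ af af'). Qed.

Lemma bprodA_term (X Y Z : C) (f : Mor X Y) (g : Mor Y Z)
  (af : allowable S f) (ag : allowable S g) (agf : allowable S (compm g f))
  (a : grp F f) (b : grp F g) (c : grp F (term S Z)) :
  castT F (termE HS (compm g f)) (bprod F agf (allF Z) (bprod F af ag a b) c)
  = castT F (termE HS f)
      (bprod F af (allF Y) a (castT F (termE HS g) (bprod F ag (allF Z) b c))).
Proof.
have agZ : allowable S (compm (term S Z) g) := allowable_comp HS ag (allF Z).
rewrite (bprod_castr _ _ agZ) castT_comp -(bprodA HF af ag (allF Z) agf agZ).
by rewrite !castT_comp; apply: castT_irr.
Qed.

End ProductsToPoint.

Unset Implicit Arguments.
Set Strict Implicit.

Theorem mainTheorem1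
  (C Cb : category) (S : fm_data C) (Sb : fm_data Cb)
  (HS : fm_axioms S) (HSb : fm_axioms Sb)
  (P : functor_data C Cb) (HP : respects S Sb P)
  (F : pwbt_data S) (HF : pwbt_axioms F)
  (H : pwbt_data Sb) (HH : pwbt_axioms H)
  (* every map to the final object is allowable *)
  (allF : forall X : C, allowable S (term S X))
  (allH : forall X : Cb, allowable Sb (term Sb X))
  (* units 1_pt and 1_ptbar *)
  (oneF : grp F (term S (pt S)))
  (oneF_r : forall (X : C) (a : grp F (term S X)),
      castT F (termE HS (term S X)) (bprod F (allF X) (allF (pt S)) a oneF) = a)
  (oneH : grp H (term Sb (pt Sb)))
  (oneH_r : forall (X : Cb) (a : grp H (term Sb X)),
      castT H (termE HSb (term Sb X)) (bprod H (allH X) (allH (pt Sb)) a oneH) = a)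
  (* squares with identity horizontal maps are independent *)
  (hidF : forall (X Y : C) (f : Mor X Y), indep S f (idh Y) f (idh X))
  (hidH : forall (X Y : Cb) (f : Mor X Y), indep Sb f (idh Y) f (idh X))
  (* natural transformation c_* : F_* -> H_* with c_*(1_pt) = 1_ptbar *)
  (cs : forall X : C, grp F (term S X) -> grp H (term Sb (Fobj P X)))
  (cs_add : forall (X : C) (a b : grp F (term S X)), cs X (a + b) = cs X a + cs X b)
  (cs_nat : forall (X Y : C) (f : Mor X Y) (cf : confined S f)
      (cbf : confined Sb (Fhom P f)) (a : grp F (term S X)),
      cs Y (push F cf (allF Y) (castT F (esym (termE HS f)) a))
      = push H cbf (allH (Fobj P Y)) (castT H (esym (termE HSb (Fhom P f))) (cs X a)))
  (cs_one : cs (pt S) oneF = castO H (esym (F_pt HP)) oneH)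
  (* orientable objects and orientation classes e_Y *)
  (orientable : C -> Prop) (or_pt : orientable (pt S))
  (e : forall Y : C, grp F (term S Y))
  (e_strong : forall Y : C, orientable Y -> strong_orientation (cs Y (e Y)))
  (e_pt : e (pt S) = oneF)
  (* gamma_f : the homomorphism F(f) -> H(fbar) determined for o-allowable f *)
  (gamma : forall (X Y : C) (f : Mor X Y), grp F f -> grp H (Fhom P f))
  (gamma_add : forall (X Y : C) (f : Mor X Y), allowable S f -> orientable Y ->
      forall a b : grp F f, gamma X Y f (a + b) = gamma X Y f a + gamma X Y f b)
  (gamma_spec : forall (X Y : C) (f : Mor X Y) (af : allowable S f), orientable Y ->
      forall (abf : allowable Sb (Fhom P f)) (a : grp F f),
      cs X (castT F (termE HS f) (bprod F af (allF Y) a (e Y)))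
      = castT H (termE HSb (Fhom P f))
          (bprod H abf (allH (Fobj P Y)) (gamma X Y f a) (cs Y (e Y))))
  (* the data of the theorem *)
  (X Y : C) (f : Mor X Y) (af : allowable S f) (oY : orientable Y) (alpha : grp F f)
  (halpha : forall (abf : allowable Sb (Fhom P f)) (beta : grp F (term S Y)),
      cs X (castT F (termE HS f) (bprod F af (allF Y) alpha beta))
      = castT H (termE HSb (Fhom P f))
          (bprod H abf (allH (Fobj P Y)) (gamma X Y f alpha) (cs Y beta))) :
  forall (Z : C) (g : Mor Y Z) (ag : allowable S g), orientable Z ->
  forall (beta : grp F g)
         (abf : allowable Sb (Fhom P f)) (abg : allowable Sb (Fhom P g)),
    castT H (F_comp HP f g) (gamma X Z (compm g f) (bprod F af ag alpha beta))
    = bprod H abf abg (gamma X Y f alpha) (gamma Y Z g beta).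
Proof.
move=> Z g ag oZ beta abf abg.
have agf : allowable S (compm g f) := allowable_comp HS af ag.
have abgf : allowable Sb (Fhom P (compm g f)) := F_allowable HP agf.
have abgbfb : allowable Sb (compm (Fhom P g) (Fhom P f)) := allowable_comp HSb abf abg.
apply: (strong_orientation_inj (af := abgbfb) (ag := allH _) (e_strong Z oZ)) => /=.
apply: (castT_inj (e := termE HSb (compm (Fhom P g) (Fhom P f)))).
rewrite (bprod_castl_term HSb allH _ abgf) -(gamma_spec _ _ _ agf oZ abgf).
rewrite (bprodA_term HS HF allF af ag) (halpha abf) (gamma_spec _ _ _ ag oZ abg).
by rewrite (bprodA_term HSb HH allH abf abg).
Qed.
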